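(* Let $T$ be a quantizable map satisfying Condition 1 and let $U=U_\Bbbk$ be a quantization of $T$ with respect to a partition $\mathcal M_\Bbbk$ of size $N_\Bbbk$ from a sequence satisfying Condition 2. There is a constant $D(T)$, independent of $n$ and $N_\Bbbk$, such that for every $f\in\mathrm{Lip}(I_c)$ and every integer $n\geq1$, $$\|U^{-n}\mathrm{Op}_\Bbbk(f)U^{n}-\mathrm{Op}_\Bbbk(f\circ T^n)\|\leq D(T)\,\|f\|_{\mathrm{Lip}}\,\frac{\Lambda_{\max}^n}{N_\Bbbk},$$ where $\|\cdot\|$ is the operator norm and $\Lambda_{\max}=\max_j\Lambda_j$.
   Context: Condition 1: $T:[0,1]\to[0,1]$, integers $\Lambda_1,\dots,\Lambda_l\geq2$ with $\sum\Lambda_j^{-1}=1$, consecutive intervals $I_1,\dots,I_l$ with $|I_j|=\Lambda_j^{-1}$, and $T$ affine with slope $\Lambda_j$ on $I_j$ mapping $I_j$ onto $[0,1]$. $\mathcal M_\Bbbk$ is the partition of $[0,1]$ into $E_i=[(i-1)/N_\Bbbk,i/N_\Bbbk]$; Condition 2 for a sequence $(\mathcal M_\Bbbk)$: $N_{\Bbbk+1}/N_\Bbbk$ is an integer $>1$ and all endpoints of the $I_j$ are endpoints of $\mathcal M_1$. With $B_\Bbbk(i,j)=|E_i\cap T^{-1}E_j|/|E_i|$, a quantization is a unitary $N_\Bbbk\times N_\Bbbk$ matrix $U_\Bbbk$ with $B_\Bbbk(j,i)=|U_\Bbbk(i,j)|^2$ for all $i,j$; $T$ is quantizable if such $U_\Bbbk$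 exist for all $\Bbbk$ for some sequence satisfying Condition 2. $\mathrm{Op}_\Bbbk(f)$ is the diagonal matrix whose $(i,i)$ entry is the average $N_\Bbbk\int_{E_i}f\,dx$. $I_c$ is the circle obtained from $[0,1]$ by identifying $0$ and $1$, with distance $d(x,y)=\min\{|x-y|,|x-y-1|\}$ (for $x\geq y$ representatives in $[0,1]$); $\|f\|_{\mathrm{Lip}}=\sup_x|f(x)|+\sup_{x\neq y}|f(x)-f(y)|/d(x,y)$ and $\mathrm{Lip}(I_c)$ is the space of functions with finite Lipschitz norm. *)

From HB Require Import structures.
From mathcomp Require Import all_boot all_order all_algebra.
From mathcomp Require Import all_classical all_reals all_analysis.
From mathcomp.real_closed Require Import complex.

Set Implicit Arguments.
Unset Strict Implicit.
Unset Printing Implicit Defensive.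

Import Order.TTheory GRing.Theory Num.Theory.
Local Open Scope classical_set_scope.
Local Open Scope ring_scope.

(* a_j = sum_{k<j} 1/Lambda_k : left endpoint of I_{j} (0-based), a_l = 1. *)
Definition endpt (R : realType) (l : nat) (Lam : 'I_l -> nat) (j : nat) : R :=
  \sum_(k < l | (k < j)%N) ((Lam k)%:R)^-1.
Arguments endpt {R l} Lam j.

(* Condition 1.  T is affine of slope Lambda_j on the interior of
   I_j = [a_j, a_{j+1}] and maps it onto [0,1]; T maps [0,1] into [0,1]
   (the value at the finitely many breakpoints is unconstrained). *)
Definition cond1 (R : realType) (T : R -> R) (l : nat) (Lam : 'I_l -> nat) : Prop :=
  [/\ (forall j, (2 <= Lam j)%N),
      \sum_(j < l) ((Lam j)%:R)^-1 = 1 :> R,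
      (forall x : R, 0 <= x <= 1 -> 0 <= T x <= 1) &
      (forall (j : 'I_l) (x : R), endpt Lam j < x < endpt Lam j.+1 ->
          T x = (Lam j)%:R * (x - endpt Lam j))].

Definition cell (R : realType) (N : nat) (i : 'I_N) : set R :=
  [set x : R | (i%:R / N%:R <= x <= (i.+1)%:R / N%:R)].

Definition transB (R : realType) (T : R -> R) (N : nat) (i j : 'I_N) : R :=
  fine (lebesgue_measure (cell i `&` T @^-1` cell j)) /
  fine (lebesgue_measure (cell i)).

Definition cabs (R : realType) (z : R[i]) : R := ComplexField.Normc.normc z.

Definition unitary (R : realType) (N : nat) (U : 'M[R[i]]_N) : Prop :=
  U *m (map_mx (@conjc R) U)^T = 1%:M.

Definition is_quantization (R : realType) (T : R -> R) (N : nat)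
    (U : 'M[R[i]]_N) : Prop :=
  unitary U /\ forall i j : 'I_N, transB T j i = cabs (U i j) ^+ 2.

Definition cond2 (R : realType) (l : nat) (Lam : 'I_l -> nat) (N : nat -> nat) : Prop :=
  [/\ (0 < N 1)%N,
      (forall k, (1 <= k)%N -> (N k %| N k.+1)%N /\ (N k < N k.+1)%N) &
      (forall j, (j <= l)%N -> exists m : nat, endpt Lam j = m%:R / (N 1)%:R :> R)].

Definition quantizable (R : realType) (T : R -> R) (l : nat) (Lam : 'I_l -> nat) : Prop :=
  exists N : nat -> nat, cond2 R Lam N /\
    forall k, (1 <= k)%N -> exists U : 'M[R[i]]_(N k), is_quantization T U.

Definition Op (R : realType) (N : nat) (f : R -> R) : 'M[R[i]]_N :=
  \matrix_(i, j) (if i == j then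
     ((N%:R * Rintegral lebesgue_measure (cell i) f)%:C)%C else 0).

Definition mxpow (R : realType) (N : nat) (A : 'M[R[i]]_N) (n : nat) : 'M[R[i]]_N :=
  iter n (mulmx A) 1%:M.

Definition vnorm (R : realType) (N : nat) (v : 'cV[R[i]]_N) : R :=
  Num.sqrt (\sum_i cabs (v i 0) ^+ 2).

Definition opnorm (R : realType) (N : nat) (A : 'M[R[i]]_N) : R :=
  sup [set vnorm (A *m v) | v in [set v : 'cV[R[i]]_N | vnorm v <= 1]].

(* distance on the circle I_c, for representatives in [0,1] *)
Definition cdist (R : realType) (x y : R) : R := Order.min `|x - y| (1 - `|x - y|).

Definition unit_int (R : realType) : set R := [set x : R | 0 <= x <= 1].

Definition sup_part (R : realType) (f : R -> R) : set R :=
  [set `|f x| | x in @unit_int R].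

Definition lip_part (R : realType) (f : R -> R) : set R :=
  [set r | exists x y, [/\ @unit_int R x, @unit_int R y, cdist x y != 0 &
                          r = `|f x - f y| / cdist x y]].

Definition lipnorm (R : realType) (f : R -> R) : R :=
  sup (sup_part f) + sup (lip_part f).

(* f in Lip(I_c): a function on [0,1] with f 0 = f 1 (0 ~ 1 on the circle)
   and finite Lipschitz norm. *)
Definition in_Lip (R : realType) (f : R -> R) : Prop :=
  [/\ f 0 = f 1, has_ubound (sup_part f) & has_ubound (lip_part f)].

Definition Lam_max (l : nat) (Lam : 'I_l -> nat) : nat := \max_(j < l) Lam j.

From HB Require Import structures.
From mathcomp Require Import all_boot all_order all_algebra.
From mathcomp Require Import all_classical all_reals all_analysis.
From mathcomp.real_closed Require Import complex.
From mathcomp Require Import ring lra zify measurable_realfun.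

(* The one-step error U^* Op(g) U - Op(g \o T) equals U^* F with
   F m j = U m j * (average of g on E_m - average of g \o T on E_j).
   If U m j <> 0 then B(j, m) > 0, so T maps some point of E_j into E_m; since T is
   affine of slope at most Lambda_max on the branch containing E_j, both averages are
   within (Lambda_max + 1) Lip(g) / N of g at that image point, and each column of U
   has O(Lambda_max) nonzero entries.  A Cauchy-Schwarz estimate row by row then bounds
   the one-step error by C Lambda_max Lip(g) / N.  Telescoping over g = f \o T^k, with
   Lip(f \o T^k) <= Lambda_max^k Lip(f), gives the factor sum_(k < n) Lambda_max^k
   <= Lambda_max^n.  For f \o T^k to be Lipschitz on the circle, T is replaced by a map
   tau sending the breakpoints to 0; T^n and tau^n differ only on a countable set, which
   does not affect the cell averages. *)

Import Order.TTheory GRing.Theory Num.Theory.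
Set Implicit Arguments.
Unset Strict Implicit.
Unset Printing Implicit Defensive.
Local Open Scope ring_scope.

Lemma sum_mul_sqr_le (R : realDomainType) (I : finType) (x y : I -> R) :
  (\sum_i x i * y i) ^+ 2 <= (\sum_i x i ^+ 2) * (\sum_i y i ^+ 2).
Proof.
set A := \sum_i x i ^+ 2; set B := \sum_i y i ^+ 2; set D := \sum_i x i * y i.
have B0 : 0 <= B by apply: sumr_ge0 => i _; rewrite sqr_ge0.
have [B_eq0|B_neq0] := eqVneq B 0.
  have y0 i : y i = 0.
    apply/eqP; rewrite -sqrf_eq0; move/eqP: B_eq0; rewrite psumr_eq0 => [/allP|j _].
      by apply; rewrite mem_index_enum.
    by rewrite sqr_ge0.
  rewrite /D big1 => [|i _]; last by rewrite y0 mulr0.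
  by rewrite expr0n /= mulr_ge0 // sumr_ge0 // => i _; rewrite sqr_ge0.
have : 0 <= \sum_i (B * x i - D * y i) ^+ 2 by apply: sumr_ge0 => i _; rewrite sqr_ge0.
have -> : \sum_i (B * x i - D * y i) ^+ 2 = B * (A * B - D ^+ 2).
  rewrite (eq_bigr (fun i => B ^+ 2 * x i ^+ 2 - (2 * B * D) * (x i * y i)
                           + D ^+ 2 * y i ^+ 2)) => [|i _]; last by rewrite sqrrB; ring.
  by rewrite !big_split /= sumrN -!mulr_sumr -/A -/B -/D; ring.
by rewrite pmulr_rge0 ?subr_ge0 // lt_def B_neq0.
Qed.

Section EuclideanNorm.
Variable R : realType.
Local Notation C := R[i].

Lemma cabsE (z : C) : ((cabs z)%:C)%C = `|z|. Proof. by []. Qed.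

Lemma cabs0 : cabs (0 : C) = 0. Proof. exact: ComplexField.Normc.normc0. Qed.

Lemma cabs_ge0 (z : C) : 0 <= cabs z.
Proof. by rewrite -lecR cabsE normr_ge0. Qed.

Lemma cabsM (a b : C) : cabs (a * b) = cabs a * cabs b.
Proof. by apply: complexI; rewrite rmorphM /= !cabsE normrM. Qed.

Lemma cabsD (a b : C) : cabs (a + b) <= cabs a + cabs b.
Proof. by rewrite -lecR rmorphD /= !cabsE ler_normD. Qed.

Lemma cabs_sum_le (I : finType) (F : I -> C) : cabs (\sum_i F i) <= \sum_i cabs (F i).
Proof.
elim/big_rec2: _ => [|i y x _ H]; first by rewrite cabs0.
by apply: le_trans (cabsD _ _) _; rewrite lerD2l.
Qed.

Lemma cabs_sqrE (z : C) : (((cabs z) ^+ 2)%:C)%C = z * conjc z.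
Proof. by rewrite rmorphXn /= cabsE normCK. Qed.

Lemma cabs_eq0 (z : C) : (cabs z == 0) = (z == 0).
Proof. by rewrite -(inj_eq (@complexI _)) cabsE /= normr_eq0. Qed.

Lemma cabs_real (x : R) : cabs (x%:C)%C = `|x|.
Proof. by rewrite /cabs /= expr0n /= addr0 sqrtr_sqr. Qed.

Definition adjoint N (A : 'M[C]_N) : 'M[C]_N := (map_mx conjc A)^T.

Definition sqnorm N (v : 'cV[C]_N) : R := \sum_i cabs (v i 0) ^+ 2.

Lemma sqnorm_ge0 N (v : 'cV[C]_N) : 0 <= sqnorm v.
Proof. by apply: sumr_ge0 => i _; rewrite sqr_ge0. Qed.

Lemma vnormE N (v : 'cV[C]_N) : vnorm v = Num.sqrt (sqnorm v). Proof. by []. Qed.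

Lemma vnorm_ge0 N (v : 'cV[C]_N) : 0 <= vnorm v.
Proof. exact: sqrtr_ge0. Qed.

Lemma vnorm0 N : vnorm (0 : 'cV[C]_N) = 0.
Proof. by rewrite vnormE /sqnorm big1 ?sqrtr0 // => i _; rewrite mxE cabs0 expr0n. Qed.

Lemma sqnormE N (v : 'cV[C]_N) : ((sqnorm v)%:C)%C = ((map_mx conjc v)^T *m v) 0 0.
Proof.
rewrite /sqnorm rmorph_sum /= !mxE; apply: eq_bigr => i _.
by rewrite cabs_sqrE !mxE mulrC.
Qed.

Lemma vnormD N (a b : 'cV[C]_N) : vnorm (a + b) <= vnorm a + vnorm b.
Proof.
set ca := fun i => cabs (a i 0); set cb := fun i => cabs (b i 0).
have sqnormD_le : sqnorm (a + b) <= \sum_i (ca i + cb i) ^+ 2.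
  apply: ler_sum => i _; rewrite mxE lerXn2r ?nnegrE ?addr_ge0 ?cabs_ge0 //.
  exact: cabsD.
have cross_le : \sum_i ca i * cb i <= vnorm a * vnorm b.
  rewrite !vnormE -sqrtrM ?sqnorm_ge0 //; apply: le_trans (ler_norm _) _.
  rewrite -(@ler_pXn2r _ 2) ?nnegrE ?normr_ge0 ?sqrtr_ge0 //.
  by rewrite sqr_sqrtr ?mulr_ge0 ?sqnorm_ge0 // real_normK ?num_real // sum_mul_sqr_le.
rewrite -(@ler_pXn2r _ 2) ?nnegrE ?addr_ge0 ?vnorm_ge0 // {1}vnormE sqr_sqrtr ?sqnorm_ge0 //.
apply: le_trans sqnormD_le _.
rewrite (eq_bigr (fun i => ca i ^+ 2 + cb i ^+ 2 + 2 * (ca i * cb i))) => [|i _]; last first.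
  by rewrite sqrrD; ring.
rewrite !big_split /= -mulr_sumr sqrrD !vnormE !sqr_sqrtr ?sqnorm_ge0 // -!vnormE.
rewrite (_ : \sum_i ca i ^+ 2 = sqnorm a) // (_ : \sum_i cb i ^+ 2 = sqnorm b) //.
by rewrite mulr2n; lra.
Qed.

Lemma sqnorm_isometry N (A : 'M[C]_N) (v : 'cV[C]_N) :
  adjoint A *m A = 1%:M -> sqnorm (A *m v) = sqnorm v.
Proof.
move=> AA; apply: (@complexI R); rewrite !sqnormE map_mxM trmx_mul.
by rewrite -mulmxA (mulmxA _ A) -/(adjoint A) AA mul1mx.
Qed.

Lemma unitary_adjoint_mul N (U : 'M[C]_N) : unitary U -> adjoint U *m U = 1%:M.
Proof. exact: mulmx1C. Qed.

Lemma adjointK N (A : 'M[C]_N) : adjoint (adjoint A) = A.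
Proof. by apply/matrixP => i j; rewrite !mxE conjcK. Qed.

Lemma vnorm_unitary N (U : 'M[C]_N) (v : 'cV[C]_N) : unitary U -> vnorm (U *m v) = vnorm v.
Proof. by move=> uU; rewrite !vnormE sqnorm_isometry // unitary_adjoint_mul. Qed.

Lemma vnorm_adjoint_unitary N (U : 'M[C]_N) (v : 'cV[C]_N) :
  unitary U -> vnorm (adjoint U *m v) = vnorm v.
Proof. by move=> uU; rewrite !vnormE sqnorm_isometry // adjointK. Qed.

Lemma vnorm_mxpow N (A : 'M[C]_N) n (v : 'cV[C]_N) :
  (forall w, vnorm (A *m w) = vnorm w) -> vnorm (mxpow A n *m v) = vnorm v.
Proof. by move=> isoA; elim: n => [|n IH]; rewrite ?mul1mx // -mulmxA isoA. Qed.

Lemma mxpowSr N (A : 'M[C]_N) n : mxpow A n.+1 = mxpow A n *m A.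
Proof.
elim: n => [|n IH]; first by rewrite /mxpow /= mulmx1 mul1mx.
by change (A *m mxpow A n.+1 = mxpow A n.+1 *m A); rewrite {1}IH mulmxA.
Qed.

Lemma invmx_unitary N (U : 'M[C]_N) : unitary U -> invmx U = adjoint U.
Proof.
move=> uU; have [Uunit _] := mulmx1_unit uU.
by rewrite -[invmx U]mulmx1 -uU mulmxA mulVmx // mul1mx.
Qed.

Lemma unitary_row_sqr_sum N (U : 'M[C]_N) m : unitary U -> \sum_j cabs (U m j) ^+ 2 = 1.
Proof.
move=> uU; apply: (@complexI R); rewrite rmorph_sum rmorph1 /=.
have := congr1 (fun M : 'M[C]_N => M m m) uU; rewrite !mxE eqxx mulr1n => <-.
by apply: eq_bigr => j _; rewrite cabs_sqrE !mxE.
Qed.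

Lemma sqr_row_sparse_le N (U : 'M[C]_N) (E : 'I_N -> 'I_N -> C) (v : 'cV[C]_N) (W : R) m :
  unitary U -> (forall j, U m j != 0 -> cabs (E m j) <= W) ->
  cabs (\sum_j U m j * E m j * v j 0) ^+ 2
    <= \sum_j W ^+ 2 * (U m j != 0)%:R * cabs (v j 0) ^+ 2.
Proof.
move=> uU EW; set y := fun j => W * (U m j != 0)%:R * cabs (v j 0).
have sum_le : cabs (\sum_j U m j * E m j * v j 0) <= \sum_j cabs (U m j) * y j.
  apply: le_trans (cabs_sum_le _) _; apply: ler_sum => j _; rewrite /y.
  have [->|nz] := eqVneq (U m j) 0; first by rewrite !mul0r cabs0 mul0r.
  rewrite mulr1 !cabsM -mulrA ler_wpM2l ?cabs_ge0 // ler_wpM2r ?cabs_ge0 //.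
  exact: EW.
have S0 : 0 <= \sum_j cabs (U m j) * y j := le_trans (cabs_ge0 _) sum_le.
apply: (@le_trans _ _ ((\sum_j cabs (U m j) * y j) ^+ 2)).
  by rewrite ler_pXn2r ?nnegrE ?cabs_ge0.
apply: le_trans (sum_mul_sqr_le _ _) _; rewrite unitary_row_sqr_sum // mul1r.
apply: ler_sum => j _; rewrite /y !exprMn.
by case: (U m j != 0); rewrite ?expr1n ?expr0n ?mulr0 ?mul0r ?mulr1.
Qed.

Lemma sqnorm_sparse_mul_le N (U : 'M[C]_N) (E : 'I_N -> 'I_N -> C) (v : 'cV[C]_N)
    (W : R) (c : nat) :
  unitary U -> (forall m j, U m j != 0 -> cabs (E m j) <= W) ->
  (forall j, #|[set m | U m j != 0%R]| <= c)%N ->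
  sqnorm ((\matrix_(m, j) (U m j * E m j)) *m v) <= c%:R * W ^+ 2 * sqnorm v.
Proof.
move=> uU EW colc.
apply: (@le_trans _ _ (\sum_m \sum_j W ^+ 2 * (U m j != 0)%:R * cabs (v j 0) ^+ 2)).
  apply: ler_sum => m _; rewrite mxE.
  under eq_bigr do rewrite mxE.
  exact: sqr_row_sparse_le (EW m).
rewrite exchange_big /sqnorm mulr_sumr; apply: ler_sum => j /= _.
rewrite -mulr_suml -mulr_sumr.
have -> : \sum_m ((U m j != 0)%:R : R) = #|[set m | U m j != 0]|%:R.
  rewrite (eq_bigr (fun m => if U m j != 0%R then 1 else 0 : R)) => [|m _]; last first.
    by case: (U m j != 0).
  by rewrite -big_mkcond sumr_const cardsE.
have card_le : (#|[set m | U m j != 0]|%:R : R) <= c%:R by rewrite ler_nat.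
by rewrite [c%:R * _]mulrC ler_wpM2r ?sqr_ge0 // ler_wpM2l ?sqr_ge0.
Qed.

Lemma vnorm_conj_diag_sub_le N (U : 'M[C]_N) (d d' : 'I_N -> C) (W : R) (c : nat)
    (v : 'cV[C]_N) :
  unitary U -> 0 <= W ->
  (forall m j, U m j != 0 -> cabs (d m - d' j) <= W) ->
  (forall j, #|[set m | U m j != 0%R]| <= c)%N ->
  vnorm ((adjoint U *m diag_mx (\row_i d i) *m U - diag_mx (\row_i d' i)) *m v)
    <= Num.sqrt c%:R * W * vnorm v.
Proof.
move=> uU W0 dW colc.
have -> : adjoint U *m diag_mx (\row_i d i) *m U - diag_mx (\row_i d' i)
    = adjoint U *m \matrix_(m, j) (U m j * (d m - d' j)).
  rewrite -[diag_mx (\row_i d' i)]mul1mx -(unitary_adjoint_mul uU) -!mulmxA -mulmxBr.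
  congr (_ *m _); apply/matrixP => m j.
  by rewrite mul_diag_mx mul_mx_diag !mxE; ring.
rewrite -mulmxA vnorm_adjoint_unitary // vnormE.
have := sqnorm_sparse_mul_le (E := fun m j => d m - d' j) v uU dW colc.
move=> /ler_wsqrtr /le_trans; apply.
by rewrite sqrtrM ?mulr_ge0 ?sqr_ge0 ?ler0n // sqrtrM ?ler0n // sqrtr_sqr ger0_norm.
Qed.

Lemma vnorm_conj_pow_sub_le N (U : 'M[C]_N) (A : nat -> 'M[C]_N) (b : nat -> R) n
    (v : 'cV[C]_N) : unitary U ->
  (forall k w, vnorm ((adjoint U *m A k *m U - A k.+1) *m w) <= b k * vnorm w) ->
  vnorm ((mxpow (adjoint U) n *m A 0%N *m mxpow U n - A n) *m v)
    <= (\sum_(k < n) b k) * vnorm v.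
Proof.
move=> uU; elim: n A b => [|n IH] A b step.
  by rewrite mul1mx mulmx1 subrr mul0mx vnorm0 big_ord0 mul0r.
set V := adjoint U.
have -> : mxpow V n.+1 *m A 0%N *m mxpow U n.+1 - A n.+1 =
    mxpow V n *m ((V *m A 0%N *m U - A 1%N) *m mxpow U n)
    + (mxpow V n *m A 1%N *m mxpow U n - A n.+1).
  change (mxpow U n.+1) with (U *m mxpow U n).
  by rewrite mxpowSr mulmxBl mulmxBr !mulmxA addrA subrK.
have first_le :
    vnorm (mxpow V n *m ((V *m A 0%N *m U - A 1%N) *m mxpow U n) *m v) <= b 0%N * vnorm v.
  rewrite -mulmxA vnorm_mxpow => [|w]; last exact: vnorm_adjoint_unitary.
  rewrite -[(_ *m mxpow U n) *m v]mulmxA.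
  rewrite -(vnorm_mxpow n v (fun w => vnorm_unitary w uU)).
  exact: step.
rewrite mulmxDl; apply: le_trans (vnormD _ _) _.
rewrite big_ord_recl mulrDl lerD //.
rewrite (eq_bigr (fun k : 'I_n => b k.+1)) => [|k _]; last by rewrite lift0.
exact: (IH (fun k => A k.+1) (fun k => b k.+1) (fun k => step k.+1)).
Qed.

End EuclideanNorm.

Local Open Scope classical_set_scope.

Lemma lipschitz_within_continuous (R : realType) (A : set R^o) (phi : R -> R^o) (M : R) :
  (forall x y, A x -> A y -> `|phi x - phi y| <= M * `|x - y|) ->
  {within A, continuous phi}.
Proof.
move=> phiM; apply/(@subspace_continuousP R^o A R^o phi) => x Ax.
apply/cvgrPdist_lt => e e0.
set M' := `|M| + 1.
have M'0 : 0 < M' by rewrite /M' ltr_pwDr ?normr_ge0.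
rewrite near_withinE; near=> y => Ay.
apply: (le_lt_trans (phiM x y Ax Ay)).
apply: (@le_lt_trans _ _ (M' * `|x - y|)).
  by rewrite ler_wpM2r ?normr_ge0 // /M' (le_trans (ler_norm M)) // lerDl.
rewrite -ltr_pdivlMl //.
near: y; apply/nbhs_ballP; exists (e / M'); first by rewrite /= divr_gt0.
by move=> y /=; rewrite /ball /= mulrC.
Unshelve. all: by end_near.
Qed.

Section Cells.
Variable R : realType.
Local Notation mu := (@lebesgue_measure R).

Lemma natr_gt0_ord N (i : 'I_N) : (0 : R) < N%:R.
Proof. by rewrite ltr0n (leq_ltn_trans (leq0n _) (ltn_ord i)). Qed.

Lemma cellE N (i : 'I_N) : cell i = `[(i%:R / N%:R : R), (i.+1%:R / N%:R)].
Proof. by rewrite set_itvcc. Qed.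

Lemma measurable_cell N (i : 'I_N) : measurable (cell i : set R).
Proof. by rewrite cellE; exact: measurable_itv. Qed.

Lemma compact_cell N (i : 'I_N) : compact (cell i : set R^o).
Proof. by rewrite cellE; exact: segment_compact. Qed.

Lemma lebesgue_measure_cell N (i : 'I_N) : mu (cell i) = ((N%:R : R)^-1)%:E.
Proof.
have N0 := natr_gt0_ord i.
rewrite cellE lebesgue_measure_itv /= lte_fin ltr_pM2r ?invr_gt0 // ltr_nat ltnS leqnn.
by congr (_%:E); rewrite -mulrBl -natrB // subSnn mul1r.
Qed.

Lemma fine_lebesgue_measure_cell N (i : 'I_N) : fine (mu (cell i)) = (N%:R : R)^-1.
Proof. by rewrite lebesgue_measure_cell. Qed.

Lemma cell_sub01 N (i : 'I_N) (x : R) : cell i x -> 0 <= x <= 1.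
Proof.
have N0 := natr_gt0_ord i; rewrite /cell /= => /andP[ix xi].
apply/andP; split; first by rewrite (le_trans _ ix) // divr_ge0 ?ler0n ?ltW.
by rewrite (le_trans xi) // ler_pdivrMr // mul1r ler_nat.
Qed.

Lemma cell_dist_le N (i : 'I_N) (x y : R) : cell i x -> cell i y -> `|x - y| <= N%:R^-1.
Proof.
rewrite /cell /= => /andP[x1 x2] /andP[y1 y2].
have width : (i.+1)%:R / N%:R - i%:R / N%:R = (N%:R : R)^-1.
  by rewrite -mulrBl -natrB // subSnn mul1r.
by rewrite ler_norml; apply/andP; split; lra.
Qed.

Lemma cell_average_dist_le N (i : 'I_N) (phi : R -> R) (c e : R) :
  {within (cell i : set R^o), continuous (phi : R -> R^o)} ->
  (forall x, cell i x -> `|phi x - c| <= e) ->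
  `|N%:R * Rintegral mu (cell i) phi - c| <= e.
Proof.
move=> phi_cont phi_near.
have N0 := natr_gt0_ord i.
have int_phi := continuous_compact_integrable (@compact_cell N i) phi_cont.
have int_cst r : mu.-integrable (cell i) (EFin \o (fun=> r)).
  apply: continuous_compact_integrable (@compact_cell N i) _.
  by apply: continuous_subspaceT => x; exact: cst_continuous.
have lo : Rintegral mu (cell i) (fun=> c - e) <= Rintegral mu (cell i) phi.
  apply: le_Rintegral => // [|x /phi_near]; first exact: measurable_cell.
  by rewrite ler_distl => /andP[].
have hi : Rintegral mu (cell i) phi <= Rintegral mu (cell i) (fun=> c + e).
  apply: le_Rintegral => // [|x /phi_near]; first exact: measurable_cell.
  by rewrite ler_distl => /andP[].
rewrite !Rintegral_cst ?fine_lebesgue_measure_cell in lo hi; try exact: measurable_cell.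
rewrite ler_distl; apply/andP; split.
  by have := ler_wpM2l (ltW N0) lo; rewrite mulrCA divff ?gt_eqF // mulr1.
by have := ler_wpM2l (ltW N0) hi; rewrite [X in _ <= X]mulrCA divff ?gt_eqF // mulr1.
Qed.

Lemma cell_index_close N (m m0 : 'I_N) (y y0 : R) (w : nat) :
  cell m y -> cell m0 y0 -> `|y - y0| <= w%:R / N%:R ->
  (m <= m0 + w.+1)%N /\ (m0 <= m + w.+1)%N.
Proof.
have N0 := natr_gt0_ord m.
rewrite /cell /= => /andP[my ym] /andP[m0y ym0]; rewrite ler_norml => /andP[lo hi].
have split_w (k : nat) : (k + w.+1)%:R / N%:R = k.+1%:R / N%:R + w%:R / N%:R :> R.
  by rewrite -mulrDl -natrD addSn addnS.
have le1 : m%:R / N%:R <= (m0 + w.+1)%:R / N%:R :> R by rewrite split_w; lra.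
have le2 : m0%:R / N%:R <= (m + w.+1)%:R / N%:R :> R by rewrite split_w; lra.
by rewrite !ler_pM2r ?invr_gt0 // !ler_nat in le1 le2.
Qed.

Lemma Op_diag N (f : R -> R) :
  Op N f = diag_mx (\row_i ((N%:R * Rintegral mu (cell i) f)%:C)%C).
Proof.
apply/matrixP => i j; rewrite /Op !mxE.
by case: eqVneq => [->|]; rewrite ?mulr1n ?mulr0n.
Qed.

End Cells.

Definition circle_lipschitz (R : realType) (K : R) (g : R -> R) :=
  g 0 = g 1 /\
  forall x y, 0 <= x <= 1 -> 0 <= y <= 1 -> `|g x - g y| <= K * `|x - y|.

Section LipschitzNorm.
Variable R : realType.

Lemma lip_part_sup_ge0 (f : R -> R) : in_Lip f -> 0 <= sup (lip_part f).
Proof.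
case=> _ _ lip_ub.
have half01 : unit_int (2^-1 : R) by rewrite /unit_int /=; apply/andP; split; lra.
have half_dist : cdist 0 (2^-1) = 2^-1 :> R.
  rewrite /cdist sub0r normrN ger0_norm ?invr_ge0 ?ler0n //.
  by rewrite (_ : 1 - 2^-1 = 2^-1 :> R) ?minxx //; field.
have : lip_part f (`|f 0 - f (2^-1)| / cdist 0 (2^-1)).
  exists 0, (2^-1); split => //; last by rewrite half_dist invr_eq0 pnatr_eq0.
  by rewrite /unit_int /= lexx ler01.
by move=> /(ub_le_sup lip_ub); apply: le_trans; rewrite half_dist divr_ge0 ?invr_ge0.
Qed.

Lemma lip_part_sup_le_lipnorm (f : R -> R) : in_Lip f -> sup (lip_part f) <= lipnorm f.
Proof.
case=> _ sup_ub _; rewrite /lipnorm lerDr.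
have : sup_part f `|f 0| by exists 0 => //; rewrite /unit_int /= lexx ler01.
by move=> /(ub_le_sup sup_ub); apply: le_trans.
Qed.

Lemma cdist_le_norm (x y : R) : cdist x y <= `|x - y|.
Proof. by rewrite /cdist ge_min lexx. Qed.

Lemma cdist_gt0 (x y : R) : 0 <= x <= 1 -> 0 <= y <= 1 -> cdist x y != 0 -> 0 < cdist x y.
Proof.
move=> /andP[x0 x1] /andP[y0 y1]; rewrite lt_def => ->.
rewrite /cdist le_min normr_ge0 subr_ge0 /=.
by have [xy|xy] := leP x y; [rewrite ler0_norm ?subr_le0 | rewrite gtr0_norm ?subr_gt0]; lra.
Qed.

Lemma in_Lip_circle_lipschitz (f : R -> R) : in_Lip f -> circle_lipschitz (sup (lip_part f)) f.
Proof.
move=> fLip; have K0 := lip_part_sup_ge0 fLip; case: fLip => f01 _ lip_ub.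
split=> // x y x01 y01.
have [cd0|cd_neq0] := eqVneq (cdist x y) 0; last first.
  have cd_gt0 := cdist_gt0 x01 y01 cd_neq0.
  have : lip_part f (`|f x - f y| / cdist x y) by exists x, y.
  move=> /(ub_le_sup lip_ub); rewrite ler_pdivrMr // => /le_trans; apply.
  by rewrite ler_wpM2l // cdist_le_norm.
(* cdist x y = 0 means x = y or {x, y} = {0, 1} *)
move: cd0 x01 y01; rewrite /cdist => + /andP[x0 x1] /andP[y0 y1].
have [_ /eqP|_ /eqP] := leP `|x - y| (1 - `|x - y|).
  by rewrite normr_eq0 subr_eq0 => /eqP ->; rewrite !subrr normr0 mulr0.
rewrite subr_eq0 => /eqP xy1.
have [[-> ->]|[-> ->]] : (x = 0 /\ y = 1) \/ (x = 1 /\ y = 0).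
  move: xy1; have [xy|xy] := leP x y.
    by rewrite ler0_norm ?subr_le0 // => ?; left; split; lra.
  by rewrite gtr0_norm ?subr_gt0 // => ?; right; split; lra.
all: by rewrite f01 subrr normr0 mulr_ge0.
Qed.

End LipschitzNorm.

Lemma lipschitz_glue (R : realType) (h : R -> R) (M : R) (a : nat -> R) (l : nat) :
  (forall j, (j < l)%N -> forall x y, a j <= x -> x <= y -> y <= a j.+1 ->
     `|h y - h x| <= M * (y - x)) ->
  forall x y, a 0%N <= x -> x <= y -> y <= a l -> `|h y - h x| <= M * (y - x).
Proof.
move=> piece.
pose lip_on u v := forall x y, u <= x -> x <= y -> y <= v -> `|h y - h x| <= M * (y - x).
have glue u v w : lip_on u v -> lip_on v w -> lip_on u w.
  move=> huv hvw x y ux xy yw.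
  have [yv|vy] := leP y v; first exact: huv.
  have [vx|xv] := leP v x; first exact: hvw.
  apply: le_trans (ler_distD (h v) _ _) _.
  apply: le_trans (lerD (hvw v y _ _ yw) (huv x v ux _ _)) _ => //.
  - exact: ltW.
  - exact: ltW.
  - by rewrite -mulrDr addrA subrK.
suff all_j : forall j, (j <= l)%N -> lip_on (a 0%N) (a j) by exact: all_j.
elim=> [_ x y x0 xy y0|j IH jl]; last exact: glue (IH (ltnW jl)) (piece j jl).
have -> : y = x by apply/eqP; rewrite eq_le xy (le_trans y0 x0).
by rewrite !subrr normr0 mulr0.
Qed.

Lemma card_le_window N (A : {set 'I_N}) (m0 w : nat) :
  (forall m, m \in A -> (m <= m0 + w)%N /\ (m0 <= m + w)%N) -> (#|A| <= (2 * w).+1)%N.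
Proof.
move=> near_m0.
pose f (m : 'I_N) : 'I_((2 * w).+1) := inord (m + w - m0).
have := @leq_card_in _ _ f (mem A); rewrite card_ord; apply.
move=> x y xA yA /(congr1 (@nat_of_ord _)).
have [x1 x2] := near_m0 x xA; have [y1 y2] := near_m0 y yA.
by rewrite !inordK; try lia; move=> xy; apply: ord_inj; lia.
Qed.

Lemma sum_expr_le (R : realFieldType) (L : R) n : 2 <= L -> \sum_(i < n) L ^+ i <= L ^+ n.
Proof.
move=> L2; elim: n => [|n IH]; first by rewrite big_ord0 expr0 ler01.
have Ln0 : 0 <= L ^+ n by rewrite exprn_ge0 //; lra.
by rewrite big_ord_recr /= exprS; nra.
Qed.

Lemma nat_le_of_le_addhalf (R : realFieldType) (M j : nat) :
  (M%:R : R) <= j%:R + 2^-1 -> (M <= j)%N.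
Proof.
move=> Mj; rewrite leqNgt; apply/negP; rewrite -(ler_nat R) -addn1 natrD => jM; lra.
Qed.

Lemma nat_lt_of_addhalf_le (R : realFieldType) (M j : nat) :
  j%:R + 2^-1 <= (M%:R : R) -> (j < M)%N.
Proof. by move=> jM; rewrite ltnNge; apply/negP; rewrite -(ler_nat R) => Mj; lra. Qed.

Section Countable.
Variable R : realType.

Lemma countable_setU (A B : set R) : countable A -> countable B -> countable (A `|` B).
Proof.
move=> cA cB.
have -> : A `|` B = \bigcup_(b in [set: bool]) (if b then A else B).
  apply/seteqP; split => x; first by case=> ?; [exists true | exists false].
  by case=> -[] _ ?; [left | right].
by apply: bigcup_countable => // -[].
Qed.

Lemma countable_measurableR (A : set R) : countable A -> measurable A.
Proof. by move=> cA; apply: countable_measurable => // t; exact: measurable_set1. Qed.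

Lemma measurable_fun_countable_modif (D A : set R) (phi psi : R -> R) :
  measurable D -> countable A -> measurable_fun D phi ->
  (forall x, D x -> ~ A x -> psi x = phi x) -> measurable_fun D psi.
Proof.
move=> mD cA mphi psi_phi _ Y mY.
have -> : D `&` psi @^-1` Y = ((D `&` phi @^-1` Y) `&` ~` A) `|` (D `&` A `&` psi @^-1` Y).
  apply/seteqP; split => x.
    move=> [Dx Yx]; have [Ax|nAx] := pselect (A x); first by right.
    by left; split => //; split => //; rewrite /preimage /= -psi_phi.
  case=> [[[Dx Yx] nAx]|[[Dx Ax] Yx]] //; split => //.
  by rewrite /preimage /= psi_phi.
have mA := countable_measurableR cA.
apply: measurableU; first by apply: measurableI; [exact: mphi | exact: measurableC].
apply: countable_measurableR; apply: (sub_countable (subset_card_le _) cA).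
by move=> x [[]].
Qed.

End Countable.

Lemma circle_lipschitz_continuous_cell (R : realType) N (i : 'I_N) (K : R) (g : R -> R) :
  circle_lipschitz K g -> {within (cell i : set R^o), continuous (g : R -> R^o)}.
Proof.
move=> [_ gK]; apply: (lipschitz_within_continuous (M := K)) => x y.
by move=> /cell_sub01 x01 /cell_sub01; apply: gK.
Qed.

(* (2 L + 3) bounds the number of nonzero entries in a column of a quantization, and
   (L + 1) Lip(g) / N the gap between the cell averages such an entry matches. *)
Definition step_const (R : realType) (L : nat) : R := Num.sqrt ((2 * L.+1).+1)%:R * (L.+1)%:R.

Lemma step_const_ge0 (R : realType) (L : nat) : 0 <= step_const R L.
Proof. by rewrite mulr_ge0 ?sqrtr_ge0 ?ler0n. Qed.

Section Dynamics.
Variables (R : realType) (T : R -> R) (l : nat) (Lam : 'I_l -> nat).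
Hypothesis T_cond1 : cond1 T Lam.
Local Notation a := (endpt (R := R) Lam).
Local Notation Lm := (Lam_max Lam).
Local Notation mu := (@lebesgue_measure R).

Lemma Lam_gt0 j : (0 : R) < (Lam j)%:R.
Proof. by case: T_cond1 => Lam2 _ _ _; rewrite ltr0n (leq_trans _ (Lam2 j)). Qed.

Lemma Lam_le_max j : (Lam j <= Lm)%N.
Proof. exact: leq_bigmax. Qed.

Lemma l_gt0 : (0 < l)%N.
Proof.
case: T_cond1 => _ sum1 _ _; rewrite lt0n; apply/negP => /eqP l0.
move: sum1; rewrite big1 => [/eqP|j _]; first by rewrite eq_sym oner_eq0.
by have := ltn_ord j; rewrite [X in (_ < X)%N]l0.
Qed.

Lemma Lam_max_ge2 : (2 <= Lm)%N.
Proof.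
by case: T_cond1 => Lam2 _ _ _; exact: leq_trans (Lam2 (Ordinal l_gt0)) (Lam_le_max _).
Qed.

Lemma endpt0 : a 0%N = 0. Proof. by rewrite /endpt big_pred0. Qed.

Lemma endpt_last : a l = 1.
Proof.
case: T_cond1 => _ sum1 _ _.
by rewrite /endpt (eq_bigl xpredT) // => k; rewrite ltn_ord.
Qed.

Lemma endptS (j : 'I_l) : a j.+1 = a j + ((Lam j)%:R)^-1.
Proof.
rewrite /endpt (bigD1 j) ?ltnSn //= addrC; congr (_ + _).
by apply: eq_bigl => k; rewrite ltnS -val_eqE /=; case: ltngtP.
Qed.

Lemma endpt_le j j' : (j <= j')%N -> a j <= a j'.
Proof.
move=> jj'; rewrite /endpt big_mkcond [leRHS]big_mkcond; apply: ler_sum => k _.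
case: ifP => [kj|_]; first by rewrite (leq_trans kj jj').
by case: ifP; rewrite ?invr_ge0 ?ler0n.
Qed.

Lemma endpt_bracket x : 0 <= x <= 1 -> exists p : 'I_l, a p <= x <= a p.+1.
Proof.
move=> /andP[x0 x1].
suff : forall j, (j < l)%N -> x <= a j.+1 -> exists p : 'I_l, a p <= x <= a p.+1.
  by move/(_ l.-1); rewrite prednK ?l_gt0 // endpt_last; apply.
elim=> [|j IH] jl xa; first by exists (Ordinal jl); rewrite /= endpt0 x0 xa.
have [xa'|ax] := leP x (a j.+1); first exact: IH (ltnW jl) xa'.
by exists (Ordinal jl); rewrite /= xa ltW.
Qed.

Lemma branch_range (p : 'I_l) x : a p <= x <= a p.+1 -> 0 <= (Lam p)%:R * (x - a p) <= 1.
Proof.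
move=> /andP[ax xa]; have L0 := Lam_gt0 p.
apply/andP; split; first by rewrite mulr_ge0 ?subr_ge0 // ltW.
by rewrite -ler_pdivlMl // mulr1 lerBlDl -endptS.
Qed.

Definition breakpoints : set R := [set x | exists j : 'I_l.+1, x = a j].

Lemma branch_dist (p : 'I_l) x y :
  `|(Lam p)%:R * (x - a p) - (Lam p)%:R * (y - a p)| = (Lam p)%:R * `|x - y|.
Proof. by rewrite -mulrBr opprB addrA subrK normrM ger0_norm ?ler0n. Qed.

(* T modified to vanish at the breakpoints: then on each closed branch [a_p, a_(p+1)],
   g \o tau agrees with g \o (branch formula) whenever g 0 = g 1. *)
Definition tau (x : R) : R := if pselect (breakpoints x) then 0 else T x.

Lemma breakpoint0 : breakpoints 0. Proof. by exists ord0; rewrite endpt0. Qed.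

Lemma breakpoint1 : breakpoints 1. Proof. by exists ord_max; rewrite endpt_last. Qed.

Lemma breakpoint_lo (p : 'I_l) : breakpoints (a p).
Proof. by exists (widen_ord (leqnSn l) p). Qed.

Lemma breakpoint_hi (p : 'I_l) : breakpoints (a p.+1).
Proof. by exists (@Ordinal l.+1 p.+1 (ltn_ord p)). Qed.

Lemma countable_breakpoints : countable breakpoints.
Proof.
apply: (sub_countable (B := [set a (nat_of_ord j) | j in [set: 'I_l.+1]])).
  by apply: subset_card_le => x [j ->]; exists j.
exact: sub_countable (card_image_le _ _) (countableP _).
Qed.

Lemma not_breakpoint_interior (p : 'I_l) x : a p < x < a p.+1 -> ~ breakpoints x.
Proof.
move=> /andP[ax xa] [j xj]; rewrite xj in ax xa.
have [jp|pj] := leqP j p; first by have := endpt_le jp; rewrite leNgt ax.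
by have := endpt_le pj; rewrite leNgt xa.
Qed.

Lemma branch_interior (p : 'I_l) x :
  a p <= x <= a p.+1 -> ~ breakpoints x -> a p < x < a p.+1.
Proof.
move=> /andP[ax xa] xnb; rewrite !lt_def ax xa !andbT.
apply/andP; split; apply/eqP => ex; apply: xnb.
  by rewrite ex; exact: breakpoint_lo.
by rewrite -ex; exact: breakpoint_hi.
Qed.

Lemma tau_breakpoint x : breakpoints x -> tau x = 0.
Proof. by rewrite /tau; case: pselect. Qed.

Lemma tau_nonbreakpoint x : ~ breakpoints x -> tau x = T x.
Proof. by rewrite /tau; case: pselect. Qed.

Lemma T_branch (p : 'I_l) x : a p < x < a p.+1 -> T x = (Lam p)%:R * (x - a p).
Proof. by case: T_cond1 => _ _ _; apply. Qed.

Lemma tau_range x : 0 <= x <= 1 -> 0 <= tau x <= 1.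
Proof.
move=> x01; rewrite /tau; case: pselect => xb; first by rewrite lexx ler01.
by case: T_cond1 => _ _ T01 _; exact: T01.
Qed.

Lemma comp_tau_branch (g : R -> R) (p : 'I_l) x : g 0 = g 1 -> a p <= x <= a p.+1 ->
  g (tau x) = g ((Lam p)%:R * (x - a p)).
Proof.
move=> g01 xp; have [xb|xnb] := pselect (breakpoints x); last first.
  by rewrite tau_nonbreakpoint // (@T_branch p) //; exact: branch_interior.
rewrite tau_breakpoint //.
have [->|xap] := eqVneq x (a p); first by rewrite subrr mulr0.
have [->|xap1] := eqVneq x (a p.+1).
  by rewrite endptS addrC addKr divff ?gt_eqF ?Lam_gt0.
have : a p < x < a p.+1.
  by case/andP: xp => ax xa; rewrite !lt_def ax xa xap (eq_sym (a p.+1)) xap1.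
by move/not_breakpoint_interior.
Qed.

Lemma circle_lipschitz_comp_tau (K : R) (g : R -> R) : 0 <= K -> circle_lipschitz K g ->
  circle_lipschitz (K * Lm%:R) (g \o tau).
Proof.
move=> K0 [g01 gK]; split.
  by rewrite /= (tau_breakpoint breakpoint0) (tau_breakpoint breakpoint1).
have piece j : (j < l)%N -> forall x y, a j <= x -> x <= y -> y <= a j.+1 ->
    `|(g \o tau) y - (g \o tau) x| <= K * Lm%:R * (y - x).
  move=> jl x y ax xy ya; pose p := Ordinal jl.
  have xp : a p <= x <= a p.+1 by rewrite ax (le_trans xy ya).
  have yp : a p <= y <= a p.+1 by rewrite ya (le_trans ax xy).
  rewrite /= (comp_tau_branch g01 xp) (comp_tau_branch g01 yp).
  apply: le_trans (gK _ _ (branch_range yp) (branch_range xp)) _.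
  rewrite branch_dist ger0_norm ?subr_ge0 // mulrA ler_wpM2r ?subr_ge0 //.
  by rewrite ler_wpM2l // ler_nat Lam_le_max.
have glued := lipschitz_glue piece; rewrite endpt0 endpt_last in glued.
move=> x y /andP[x0 x1] /andP[y0 y1].
have [xy|yx] := orP (le_total x y); last first.
  by rewrite (ger0_norm (x := x - y)) ?subr_ge0 //; exact: glued y0 yx x1.
by rewrite distrC (distrC x) (ger0_norm (x := y - x)) ?subr_ge0 //; exact: glued.
Qed.

Lemma circle_lipschitz_comp_iter_tau (K : R) (f : R -> R) n : 0 <= K ->
  circle_lipschitz K f -> circle_lipschitz (K * Lm%:R ^+ n) (f \o iter n tau).
Proof.
move=> K0 fK; elim: n => [|n IH]; first by rewrite expr0 mulr1.
have -> : f \o iter n.+1 tau = (f \o iter n tau) \o tau.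
  by apply: funext => x; rewrite /comp iterSr.
by rewrite exprSr mulrA; apply: circle_lipschitz_comp_tau; rewrite ?mulr_ge0 ?exprn_ge0.
Qed.

Lemma transB_neq0_witness N (j m : 'I_N) : transB T j m != 0 ->
  exists x0, [/\ cell j x0, ~ breakpoints x0 & cell m (T x0)].
Proof.
apply: contraNP => no_witness; rewrite /transB.
suff -> : mu (cell j `&` T @^-1` cell m) = 0%E by rewrite mul0r.
apply/countable_lebesgue_measure0/(sub_countable (subset_card_le _) countable_breakpoints).
by move=> x [jx mTx]; apply: contrapT => xnb; apply: no_witness; exists x.
Qed.

Lemma endpt_grid (N : nat -> nat) k : cond2 R Lam N -> (1 <= k)%N ->
  (0 < N k)%N /\ forall j, (j <= l)%N -> exists M : nat, a j = M%:R / (N k)%:R.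
Proof.
case=> N1_gt0 N_incr a_grid k1.
have [/dvdnP[q Nk] Nk_gt0] : (N 1 %| N k)%N /\ (0 < N k)%N.
  elim: k k1 => // k IH; rewrite ltnS leq_eqVlt => /orP[/eqP <-|k1]; first by rewrite dvdnn.
  have [N1k Nk_gt0] := IH k1; have [Nk_dvd Nk_lt] := N_incr k k1.
  by split; [exact: dvdn_trans N1k Nk_dvd | exact: ltn_trans Nk_gt0 Nk_lt].
split=> // j jl; have [M aj] := a_grid j jl; exists (M * q)%N.
have q0 : (q%:R : R) != 0 by rewrite pnatr_eq0; apply: contraTneq Nk_gt0 => q0; rewrite Nk q0.
have N10 : ((N 1)%:R : R) != 0 by rewrite pnatr_eq0 -lt0n.
by rewrite aj Nk !natrM; field; apply/andP.
Qed.

Definition branch_aligned N :=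
  forall j : 'I_N, exists p : 'I_l, forall x, cell j x -> a p <= x <= a p.+1.

Lemma cond2_branch_aligned (N : nat -> nat) k :
  cond2 R Lam N -> (1 <= k)%N -> branch_aligned (N k).
Proof.
move=> N_cond2 k1 j; have [Nk_gt0 a_grid] := endpt_grid N_cond2 k1.
have N0 : (0 : R) < (N k)%:R by rewrite ltr0n.
have jN : (j%:R + 1 : R) <= (N k)%:R by rewrite natr1 ler_nat.
(* the midpoint of the cell lies in some branch, whose endpoints are grid points *)
have mid01 : 0 <= ((j%:R + 2^-1) / (N k)%:R : R) <= 1.
  apply/andP; split; first by rewrite divr_ge0 ?ltW // addr_ge0 ?ler0n //; lra.
  by rewrite ler_pdivrMr // mul1r; lra.
have [p /andP[ap pa]] := endpt_bracket mid01.
exists p => y /andP[jy yj].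
have [M aM] := a_grid p (ltnW (ltn_ord p)).
have [M' aM'] := a_grid p.+1 (ltn_ord p).
rewrite aM aM' !ler_pM2r ?invr_gt0 // in ap pa *.
apply/andP; split.
  by apply: le_trans jy; rewrite ler_pM2r ?invr_gt0 // ler_nat; exact: nat_le_of_le_addhalf ap.
by apply: le_trans yj _; rewrite ler_pM2r ?invr_gt0 // ler_nat; exact: nat_lt_of_addhalf_le pa.
Qed.

Lemma quantization_support N (U : 'M[R[i]]_N) (j m : 'I_N) (p : 'I_l) :
  is_quantization T U -> (forall x, cell j x -> a p <= x <= a p.+1) -> U m j != 0 ->
  exists x0, cell j x0 /\ cell m ((Lam p)%:R * (x0 - a p)).
Proof.
move=> [_ BU] jp Umj.
have : transB T j m != 0 by rewrite BU sqrf_eq0 cabs_eq0.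
move=> /transB_neq0_witness[x0 [jx0 x0nb mTx0]]; exists x0; split => //.
by rewrite -(@T_branch p) // branch_interior // jp.
Qed.

Lemma cell_average_gap_le N (U : 'M[R[i]]_N) (j m : 'I_N) (p : 'I_l) (K : R) (g : R -> R) :
  is_quantization T U -> 0 <= K -> circle_lipschitz K g ->
  (forall x, cell j x -> a p <= x <= a p.+1) -> U m j != 0 ->
  `|N%:R * Rintegral mu (cell m) g - N%:R * Rintegral mu (cell j) (g \o tau)|
    <= K * (Lm.+1)%:R / N%:R.
Proof.
move=> qU K0 gK jp Umj; have [x0 [jx0 my0]] := quantization_support qU jp Umj.
set y0 := (Lam p)%:R * (x0 - a p) in my0.
have N0 := natr_gt0_ord R j.
have gap_m : `|N%:R * Rintegral mu (cell m) g - g y0| <= K / N%:R.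
  apply: cell_average_dist_le; first exact: circle_lipschitz_continuous_cell gK.
  move=> z mz; case: gK => _ gK; apply: le_trans (gK _ _ (cell_sub01 mz) (cell_sub01 my0)) _.
  by rewrite ler_wpM2l // (cell_dist_le mz my0).
have gap_j : `|N%:R * Rintegral mu (cell j) (g \o tau) - g y0| <= K * Lm%:R / N%:R.
  apply: cell_average_dist_le.
    exact: circle_lipschitz_continuous_cell (circle_lipschitz_comp_tau K0 gK).
  move=> x jx; case: (gK) => g01 gK'; rewrite /= (comp_tau_branch g01 (jp x jx)).
  apply: le_trans (gK' _ _ (branch_range (jp x jx)) (branch_range (jp x0 jx0))) _.
  rewrite branch_dist -mulrA ler_wpM2l // ler_pM ?ler0n ?normr_ge0 //.
    by rewrite ler_nat Lam_le_max.
  exact: cell_dist_le jx jx0.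
apply: le_trans (ler_distD (g y0) _ _) _.
rewrite [`|g y0 - _|]distrC; apply: le_trans (lerD gap_m gap_j) _.
by rewrite -natr1 le_eqVlt; apply/orP; left; apply/eqP; ring.
Qed.

Lemma quantization_column_card_le N (U : 'M[R[i]]_N) (j : 'I_N) (p : 'I_l) :
  is_quantization T U -> (forall x, cell j x -> a p <= x <= a p.+1) ->
  (#|[set m | U m j != 0%R]%SET| <= (2 * Lm.+1).+1)%N.
Proof.
move=> qU jp; case: (pickP (fun m => U m j != 0%R)) => [m0 Um0j|none]; last first.
  by rewrite (@eq_card0 _ [set m | U m j != 0%R]%SET) // => m; rewrite inE none.
have [x0 [jx0 m0y0]] := quantization_support qU jp Um0j.
apply: (@card_le_window _ _ m0) => m; rewrite inE => Umj.
have [x [jx my]] := quantization_support qU jp Umj.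
apply: cell_index_close my m0y0 _.
rewrite branch_dist ler_pM ?ler0n ?normr_ge0 //; first by rewrite ler_nat Lam_le_max.
exact: cell_dist_le jx jx0.
Qed.

Lemma conj_Op_sub_le N (U : 'M[R[i]]_N) (K : R) (g : R -> R) (v : 'cV[R[i]]_N) :
  branch_aligned N -> is_quantization T U -> 0 <= K -> circle_lipschitz K g ->
  vnorm ((adjoint U *m Op N g *m U - Op N (g \o tau)) *m v)
    <= step_const R Lm / N%:R * K * vnorm v.
Proof.
move=> aligned qU K0 gK; rewrite !Op_diag.
apply: le_trans (vnorm_conj_diag_sub_le (W := K * (Lm.+1)%:R / N%:R) (c := (2 * Lm.+1).+1)
  v qU.1 _ _ _) _.
- by rewrite !mulr_ge0 ?ler0n ?invr_ge0.
- move=> m j Umj; have [p jp] := aligned j; rewrite -rmorphB cabs_real.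
  exact: cell_average_gap_le qU K0 gK jp Umj.
- by move=> j; have [p jp] := aligned j; exact: quantization_column_card_le qU jp.
by rewrite /step_const le_eqVlt; apply/orP; left; apply/eqP; ring.
Qed.

Lemma countable_preimage_tau (S : set R) : countable S ->
  countable [set x | 0 <= x <= 1 /\ S (tau x)].
Proof.
move=> cS.
apply: (sub_countable (subset_card_le (B := breakpoints `|`
    \bigcup_(p in [set: 'I_l]) [set a p + s / (Lam p)%:R | s in S]) _)).
  move=> x [x01 Stx]; have [xb|xnb] := pselect (breakpoints x); first by left.
  right; have [p xp] := endpt_bracket x01; exists p => //; exists (tau x) => //.
  rewrite tau_nonbreakpoint // (@T_branch p); last exact: branch_interior.
  by field; rewrite gt_eqF ?Lam_gt0.
apply: countable_setU; first exact: countable_breakpoints.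
by apply: bigcup_countable => // p _; exact: sub_countable (card_image_le _ _) cS.
Qed.

Definition orbit_hits_breakpoint n :=
  [set x : R | 0 <= x <= 1 /\ exists2 i, (i < n)%N & breakpoints (iter i tau x)].

Lemma countable_orbit_hits_breakpoint n : countable (orbit_hits_breakpoint n).
Proof.
have hits_at i : countable [set x | 0 <= x <= 1 /\ breakpoints (iter i tau x)].
  elim: i => [|i IH].
    by apply: sub_countable (subset_card_le _) countable_breakpoints => x [].
  apply: sub_countable (subset_card_le _) (countable_preimage_tau IH).
  by move=> x [x01 bx]; split=> //; split; [exact: tau_range | rewrite -iterSr].
apply: (sub_countable (subset_card_le (B := \bigcup_(i in [set: nat])
    [set x | 0 <= x <= 1 /\ breakpoints (iter i tau x)]) _)).
  by move=> x [x01 [i _ bx]]; exists i.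
exact: bigcup_countable.
Qed.

Lemma iter_T_tau n x : (forall i, (i < n)%N -> ~ breakpoints (iter i tau x)) ->
  iter n T x = iter n tau x.
Proof.
elim: n => [//|n IH] good /=.
rewrite IH => [|i /ltnW]; last exact: good.
by rewrite tau_nonbreakpoint //; exact: good.
Qed.

Lemma Rintegral_comp_iter_T N (i : 'I_N) (f : R -> R) (K : R) n :
  0 <= K -> circle_lipschitz K f ->
  Rintegral mu (cell i) (f \o iter n T) = Rintegral mu (cell i) (f \o iter n tau).
Proof.
move=> K0 fK; have cbad := countable_orbit_hits_breakpoint n.
have orbit_eq x : cell i x -> ~ orbit_hits_breakpoint n x ->
    (f \o iter n T) x = (f \o iter n tau) x.
  move=> ix xgood; rewrite /= iter_T_tau // => k kn kb.
  by apply: xgood; split; [exact: cell_sub01 ix | exists k].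
have m_tau : measurable_fun (cell i) (f \o iter n tau).
  apply: subspace_continuous_measurable_fun; first exact: measurable_cell.
  exact: circle_lipschitz_continuous_cell (circle_lipschitz_comp_iter_tau n K0 fK).
have m_T := measurable_fun_countable_modif (measurable_cell i) cbad m_tau orbit_eq.
rewrite /Rintegral; congr fine; apply: ae_eq_integral.
- exact: measurable_cell.
- exact/measurable_EFinP.
- exact/measurable_EFinP.
exists (orbit_hits_breakpoint n); split.
- exact: countable_measurableR cbad.
- exact: countable_lebesgue_measure0 cbad.
move=> x /= xbad; apply: contrapT => xgood; apply: xbad => ix.
by have /= -> := orbit_eq x ix xgood.
Qed.

Lemma Op_comp_iter_T N (f : R -> R) (K : R) n : 0 <= K -> circle_lipschitz K f ->
  Op N (f \o iter n T) = Op N (f \o iter n tau).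
Proof. by move=> K0 fK; apply/matrixP => i j; rewrite !mxE (Rintegral_comp_iter_T i n K0 fK). Qed.

Lemma conj_Op_comp_iter_sub_le N (U : 'M[R[i]]_N) (K : R) (f : R -> R) j
    (w : 'cV[R[i]]_N) :
  branch_aligned N -> is_quantization T U -> 0 <= K -> circle_lipschitz K f ->
  vnorm ((adjoint U *m Op N (f \o iter j tau) *m U - Op N (f \o iter j.+1 tau)) *m w)
    <= step_const R Lm / N%:R * K * Lm%:R ^+ j * vnorm w.
Proof.
move=> aligned qU K0 fK.
have -> : f \o iter j.+1 tau = (f \o iter j tau) \o tau.
  by apply: funext => x; rewrite /comp iterSr.
rewrite -(mulrA _ K); apply: conj_Op_sub_le => //; last exact: circle_lipschitz_comp_iter_tau.
by rewrite mulr_ge0 ?exprn_ge0 ?ler0n.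
Qed.

Lemma conj_pow_Op_sub_le N (U : 'M[R[i]]_N) (K : R) (f : R -> R) n (v : 'cV[R[i]]_N) :
  branch_aligned N -> is_quantization T U -> 0 <= K -> circle_lipschitz K f ->
  vnorm ((mxpow (adjoint U) n *m Op N f *m mxpow U n - Op N (f \o iter n T)) *m v)
    <= step_const R Lm * K * Lm%:R ^+ n / N%:R * vnorm v.
Proof.
move=> aligned qU K0 fK; rewrite (Op_comp_iter_T _ n K0 fK).
have := vnorm_conj_pow_sub_le (A := fun j => Op N (f \o iter j tau))
  (b := fun j => step_const R Lm / N%:R * K * Lm%:R ^+ j) n v qU.1
  (fun j w => conj_Op_comp_iter_sub_le j w aligned qU K0 fK).
move=> /le_trans; apply; rewrite -mulr_sumr ler_wpM2r ?vnorm_ge0 //.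
rewrite (_ : step_const R Lm * K * Lm%:R ^+ n / N%:R
            = step_const R Lm / N%:R * K * Lm%:R ^+ n); last by ring.
rewrite ler_wpM2l ?mulr_ge0 ?invr_ge0 ?ler0n ?step_const_ge0 // sum_expr_le //.
by rewrite (ler_nat R 2) Lam_max_ge2.
Qed.

End Dynamics.

Local Close Scope classical_set_scope.

Theorem theorem5 (R : realType) (T : R -> R) (l : nat) (Lam : 'I_l -> nat) :
  cond1 T Lam -> quantizable T Lam ->
  exists D : R,
    forall N : nat -> nat, cond2 R Lam N ->
    forall k : nat, (1 <= k)%N ->
    forall U : 'M[R[i]]_(N k), is_quantization T U ->
    forall f : R -> R, in_Lip f ->
    forall n : nat, (1 <= n)%N ->
      opnorm (mxpow (invmx U) n *m Op (N k) f *m mxpow U n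
              - Op (N k) (f \o iter n T))
      <= D * lipnorm f * ((Lam_max Lam)%:R ^+ n) / (N k)%:R.
Proof.
move=> T_cond1 _; exists (step_const R (Lam_max Lam)) => N N_cond2 k k1 U qU f fLip n _.
have aligned := cond2_branch_aligned T_cond1 N_cond2 k1.
have K0 := lip_part_sup_ge0 fLip.
have bound v := conj_pow_Op_sub_le T_cond1 n v aligned qU K0 (in_Lip_circle_lipschitz fLip).
rewrite (invmx_unitary qU.1); set X := (X in opnorm X).
apply: ge_sup; first by exists (vnorm (X *m 0)), 0 => //=; rewrite vnorm0 ler01.
move=> _ [v v1 <-]; apply: le_trans (bound v) _.
set c := step_const R (Lam_max Lam); set L := (Lam_max Lam)%:R ^+ n.
apply: (@le_trans _ _ (c * sup (lip_part f) * L / (N k)%:R)).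
  by rewrite ler_piMr ?mulr_ge0 ?exprn_ge0 ?invr_ge0 ?ler0n ?step_const_ge0.
rewrite ler_wpM2r ?invr_ge0 ?ler0n // ler_wpM2r ?exprn_ge0 ?ler0n //.
by rewrite ler_wpM2l ?step_const_ge0 // lip_part_sup_le_lipnorm.
Qed.
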